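(* Let $M$ be a $\Sigma$-automaton and $0<\xi<1$ such that $(\Sigma^\infty,\rho_{M,\xi})$ is a pseudo-quasimetric space. Then the induced pseudo-metric space $(\mathcal A_M,\tilde\rho_{M,\xi})$ is complete: every sequence $(a_k)$ in $\mathcal A_M$ with $\tilde\rho_{M,\xi}(a_m,a_n)\to0$ as $m,n\to\infty$ has a limit $a\in\mathcal A_M$ with $\tilde\rho_{M,\xi}(a_k,a)\to0$.
   Context: $\Sigma=\{1,\dots,N\}$. A $\Sigma$-automaton $M$ has finite state set $Q=Q_0\cup\{Id,Exit\}$, input alphabet $\Sigma^2$, initial state $Id$, final state $Exit$, transition $\delta:Q\times\Sigma^2\to Q$ with $\delta(Id,(i,j))=Id$ iff $i=j$. Itinerary of $(\mathbf x,\mathbf y)$: $S_0=Id$, $S_k=\delta(S_{k-1},(x_k,y_k))$, stopped at $Exit$; $T_M(\mathbf x,\mathbf y)$ = largest $k$ with $S_k\ne Exit$ (possibly $\infty$); $\rho_{M,\xi}(\mathbf x,\mathbf y)=\xi^{T_M(\mathbf x,\mathbf y)}$ ($\xi^\infty=0$). A pseudo-quasimetric space $(\mathcal A,\rho)$: $\rho\ge0$, $\rho(x,x)=0$, symmetric, $\rho(x,z)\le C(\rho(x,y)+\rho(y,z))$ for a fixed $C\ge1$. $\mathcal A_M=\Sigma^\infty/\sim$ where $\mathbf x\sim\mathbf y$ iff $\rho_{M,\xi}(\mathbf x,\mathbf y)=0$, and $\tilde\rho_{M,\xi}([\mathbf x],[\mathbf y])=\inf\{\rho_{M,\xi}(\mathbf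 a,\mathbf b):\mathbf a\in[\mathbf x],\mathbf b\in[\mathbf y]\}$. *)

From HB Require Import structures.
From mathcomp Require Import all_boot all_order all_algebra.
From mathcomp Require Import boolp classical_sets reals.
Set Implicit Arguments. Unset Strict Implicit. Unset Printing Implicit Defensive.
Import Order.TTheory GRing.Theory Num.Theory.
Local Open Scope ring_scope.
Local Open Scope classical_set_scope.

(* Sigma = {1,..,N} is represented by 'I_N (values 0..N-1);
   Sigma^infty is nat -> 'I_N, where index k stands for the paper's x_{k+1}. *)

Definition itin (N : nat) (Q : finType) (delta : Q -> 'I_N * 'I_N -> Q)
  (Id Exit : Q) (x y : nat -> 'I_N) : nat -> Q :=
  fix S k := match k with
             | 0 => Id
             | k'.+1 => let s := S k' in
                        if s == Exit then Exit else delta s (x k', y k')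
             end.

(* rho_{M,xi}(x,y) = xi ^ T_M(x,y), where T_M = largest k with S_k <> Exit
   = (first k with S_k = Exit) - 1, and xi^infty = 0 if Exit is never reached. *)
Definition rhoM (R : realType) (N : nat) (Q : finType)
  (delta : Q -> 'I_N * 'I_N -> Q) (Id Exit : Q) (xi : R)
  (x y : nat -> 'I_N) : R :=
  match pselect (exists k, itin delta Id Exit x y k == Exit) with
  | left H => xi ^+ (ex_minn H).-1
  | right _ => 0
  end.

Definition pseudo_quasimetric (R : realType) (A : Type) (rho : A -> A -> R) :=
  exists C : R, 1 <= C /\
   (forall x y, 0 <= rho x y) /\ (forall x, rho x x = 0) /\
   (forall x y, rho x y = rho y x) /\
   (forall x y z, rho x z <= C * (rho x y + rho y z)).

(* tilde rho on classes [x], [y] (with [x] = {a | rho x a = 0}),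
   expressed through representatives x, y. *)
Definition rho_tilde (R : realType) (A : Type) (rho : A -> A -> R) (x y : A) : R :=
  inf [set r | exists a b, rho x a = 0 /\ rho y b = 0 /\ r = rho a b].

From HB Require Import structures.
From mathcomp Require Import all_boot all_order all_algebra.
From mathcomp Require Import boolp classical_sets reals topology normedtype sequences.
Set Implicit Arguments. Unset Strict Implicit. Unset Printing Implicit Defensive.
Import Order.TTheory GRing.Theory Num.Theory.
Local Open Scope ring_scope.

(* Since rho(x, y) <= C^2 rho~(x, y) <= C^2 rho(x, y), it suffices to show that
   (Sigma^infty, rho) is complete.  Now rho(x, y) < xi^n means that the itinerary
   of (x, y) has not exited by step n, a property of the first n letters alone.
   By Koenig's lemma over the finite alphabet there is a word b each of whose
   prefixes is shared by infinitely many terms of the Cauchy sequence; comparing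
   a_k with such a term a_m shows rho(a_k, b) <= xi^n for all large k. *)

Definition cauchy_seq (R : realType) (A : Type) (d : A -> A -> R) (a : nat -> A) :=
  forall eps : R, 0 < eps -> exists K : nat, forall m n : nat,
    (K <= m)%N -> (K <= n)%N -> d (a m) (a n) < eps.

Definition cvg_seq_to (R : realType) (A : Type) (d : A -> A -> R)
    (a : nat -> A) (b : A) :=
  forall eps : R, 0 < eps -> exists K : nat, forall k : nat,
    (K <= k)%N -> d (a k) b < eps.

Lemma exists_expr_lt (R : realType) (x eps : R) :
  `|x| < 1 -> 0 < eps -> exists n : nat, x ^+ n < eps.
Proof.
move=> x1 eps_gt0; have [n _ xn_lt] := cvgr_lt _ (cvg_expr x1) _ eps_gt0.
by exists n; apply: xn_lt => /=.
Qed.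

Section RhoTilde.
Variables (R : realType) (A : Type) (rho : A -> A -> R).

Lemma rho_tilde_le x y : pseudo_quasimetric rho -> rho_tilde rho x y <= rho x y.
Proof.
move=> [_ [_ [rho_ge0 [rho_xx _]]]]; apply: ge_inf; last by exists x, y.
by exists 0 => _ [p [q [_ [_ ->]]]]; apply: rho_ge0.
Qed.

Lemma pseudo_quasimetric_le_rho_tilde :
  pseudo_quasimetric rho ->
  exists2 c : R, 0 < c & forall x y, rho x y <= c * rho_tilde rho x y.
Proof.
move=> [C [C_ge1 [_ [rho_xx [rhoC rhoT]]]]].
have C_gt0 : 0 < C by apply: lt_le_trans C_ge1.
exists (C * C) => [|x y]; first exact: mulr_gt0.
rewrite -ler_pdivrMl ?mulr_gt0 //; apply: lb_le_inf; first by exists (rho x y), x, y.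
move=> _ [p [q [rho_xp [rho_yq ->]]]]; rewrite ler_pdivrMl ?mulr_gt0 //.
have rho_py : rho p y <= C * rho p q.
  by have := rhoT p q y; rewrite (rhoC q y) rho_yq addr0.
apply: (le_trans (rhoT x p y)); by rewrite rho_xp add0r -mulrA ler_pM2l.
Qed.

Lemma cauchy_seq_rho_tilde a :
  pseudo_quasimetric rho -> cauchy_seq (rho_tilde rho) a -> cauchy_seq rho a.
Proof.
move=> /pseudo_quasimetric_le_rho_tilde [c c_gt0 rho_le] a_cauchy eps eps_gt0.
have [K HK] := a_cauchy (eps / c) (divr_gt0 eps_gt0 c_gt0).
exists K => m n Km Kn; apply: le_lt_trans (rho_le _ _) _.
by rewrite -ltr_pdivlMl // mulrC HK.
Qed.

Lemma cvg_seq_to_rho_tilde a b : pseudo_quasimetric rho ->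
  cvg_seq_to rho a b -> cvg_seq_to (rho_tilde rho) a b.
Proof.
move=> rho_pqm ab eps /ab [K HK]; exists K => k /HK.
exact/le_lt_trans/rho_tilde_le.
Qed.

End RhoTilde.

Section Koenig.
Variable T : finType.

Definition infinitely_often (P : nat -> Prop) := forall M, exists2 m, (M <= m)%N & P m.

Lemma infinitely_often_fiber (P : nat -> Prop) (f : nat -> T) :
  infinitely_often P -> exists t, infinitely_often (fun m => P m /\ f m = t).
Proof.
move=> P_inf; apply: contrapT => no_fiber.
have bounded t : exists M, forall m, (M <= m)%N -> ~ (P m /\ f m = t).
  apply: contrapT => unbounded; apply: no_fiber; exists t => M.
  apply: contrapT => no_m; apply: unbounded; exists M => m Mm Pm.
  by apply: no_m; exists m.
have [bound Hbound] := choice bounded.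
have [m Mm Pm] := P_inf (\max_t bound t).
by apply: (Hbound (f m) m) => //; apply: leq_trans Mm; apply: leq_bigmax.
Qed.

Variable a : nat -> nat -> T.

Definition next_letter (P : nat -> Prop) n : T :=
  xget (a 0 0) (fun t => infinitely_often (fun m => P m /\ a m n = t)).

Fixpoint agrees_upto n : nat -> Prop :=
  match n with
  | 0 => fun _ => True
  | n'.+1 => fun m => agrees_upto n' m /\ a m n' = next_letter (agrees_upto n') n'
  end.

Definition koenig_seq n := next_letter (agrees_upto n) n.

Lemma infinitely_often_agrees_upto n : infinitely_often (agrees_upto n).
Proof.
elim: n => [|n IH] /=; first by move=> M; exists M.
exact: xgetPex (infinitely_often_fiber _ IH).
Qed.

Lemma agrees_upto_koenig_seq n m :
  agrees_upto n m -> forall i, (i < n)%N -> a m i = koenig_seq i.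
Proof.
elim: n => [|n IH] //= [agree_n am_n] i.
rewrite ltnS leq_eqVlt => /predU1P [-> //|]; exact: IH.
Qed.

Lemma exists_prefix_cluster : exists b : nat -> T, forall n M,
  exists2 m, (M <= m)%N & forall i, (i < n)%N -> a m i = b i.
Proof.
exists koenig_seq => n M.
have [m Mm agree] := infinitely_often_agrees_upto n M.
by exists m => //; apply: agrees_upto_koenig_seq.
Qed.

End Koenig.

Section Itinerary.
Variables (N : nat) (Q : finType) (delta : Q -> 'I_N * 'I_N -> Q) (Id Exit : Q).
Local Notation itin := (itin delta Id Exit).

Lemma itin_Exit_absorbing x y k l :
  (k <= l)%N -> itin x y k = Exit -> itin x y l = Exit.
Proof.
move=> /subnK <-; elim: (l - k)%N => [|d IH] // exit_k.
by rewrite addSn /= IH ?eqxx.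
Qed.

Lemma itin_eq_prefix x x' y y' n :
  (forall i, (i < n)%N -> x i = x' i) -> (forall i, (i < n)%N -> y i = y' i) ->
  itin x y n = itin x' y' n.
Proof.
elim: n => [|n IH] //= eq_x eq_y.
rewrite IH ?eq_x ?eq_y // => i /ltnW; [exact: eq_x | exact: eq_y].
Qed.

Variables (R : realType) (xi : R).
Hypotheses (xi_gt0 : 0 < xi) (xi_lt1 : xi < 1).
Local Notation rho := (rhoM delta Id Exit xi).

Lemma rhoM_le_expr x y n : itin x y n != Exit -> rho x y <= xi ^+ n.
Proof.
move=> alive; rewrite /rhoM; case: pselect => [?|_]; last first.
  by rewrite exprn_ge0 // ltW.
case: ex_minnP => m /eqP exit_m _.
have n_lt_m : (n < m)%N.
  by rewrite ltnNge; apply: contraNN alive => /itin_Exit_absorbing/(_ exit_m) ->.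
by rewrite ler_wiXn2l ?ltW // -ltnS prednK // (leq_ltn_trans _ n_lt_m).
Qed.

Lemma itin_neq_Exit_of_rhoM_lt x y n : rho x y < xi ^+ n -> itin x y n != Exit.
Proof.
apply: contraTN => /eqP exit_n; rewrite -leNgt /rhoM.
case: pselect => [?|]; last by case; exists n; rewrite exit_n.
case: ex_minnP => m _ /(_ n); rewrite exit_n eqxx => /(_ isT) m_le_n.
by rewrite ler_wiXn2l ?ltW // (leq_trans (leq_pred m)).
Qed.

Lemma rhoM_complete (a : nat -> nat -> 'I_N) :
  cauchy_seq rho a -> exists b, cvg_seq_to rho a b.
Proof.
move=> a_cauchy; have [b b_cluster] := exists_prefix_cluster a.
exists b => eps eps_gt0.
have xi_norm_lt1 : `|xi| < 1 by rewrite gtr0_norm.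
have [n xn_lt_eps] := exists_expr_lt xi_norm_lt1 eps_gt0.
have [K HK] := a_cauchy (xi ^+ n) (exprn_gt0 n xi_gt0).
exists K => k Kk; have [m Km am_b] := b_cluster n K.
apply: le_lt_trans (rhoM_le_expr _) xn_lt_eps.
rewrite -(itin_eq_prefix (fun _ _ => erefl) am_b).
exact/itin_neq_Exit_of_rhoM_lt/HK.
Qed.

End Itinerary.

Theorem lemma2p3 (R : realType) (N : nat) (Q : finType)
  (delta : Q -> 'I_N * 'I_N -> Q) (Id Exit : Q) (xi : R) :
  Id != Exit ->
  (forall i j : 'I_N, (delta Id (i, j) == Id) = (i == j)) ->
  0 < xi -> xi < 1 ->
  pseudo_quasimetric (rhoM delta Id Exit xi) ->
  forall a : nat -> (nat -> 'I_N),
    (forall eps : R, 0 < eps -> exists K : nat, forall m n : nat,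
        (K <= m)%N -> (K <= n)%N ->
        rho_tilde (rhoM delta Id Exit xi) (a m) (a n) < eps) ->
    exists b : nat -> 'I_N,
      forall eps : R, 0 < eps -> exists K : nat, forall k : nat,
        (K <= k)%N -> rho_tilde (rhoM delta Id Exit xi) (a k) b < eps.
Proof.
move=> _ _ xi_gt0 xi_lt1 rho_pqm a /(cauchy_seq_rho_tilde rho_pqm).
move=> /(rhoM_complete xi_gt0 xi_lt1) [b ab].
by exists b; apply: cvg_seq_to_rho_tilde ab.
Qed.
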